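(* Let $\rho>1$. There exist a constant $D_0>0$ and an integer $N$, depending only on $T$ and $\rho$, such that for every $k$ and every pair of admissible $(k+1)$-words $w_1,w_2$ with $d_1\ge N$ and $d_2\ge N$, one has $|p_{11}(t)p_{22}(t)-p_{12}(t)p_{21}(t)|\ge D_0|t|^{d_1+d_2}$ for all complex $t$ with $|t|\ge\rho$.
   Context: Let $\mathcal{A}$ be a finite alphabet of $r$ symbols and $T=(T_{x,y})$ an irreducible $r\times r$ matrix with entries in $\{0,1\}$ (the directed graph on $\mathcal{A}$ with an edge $x\to y$ iff $T_{y,x}=1$ is strongly connected). An admissible $k$-word is a string $a_1\cdots a_k$ with $T_{a_{i+1},a_i}=1$ for all $i$. $V_k$ is the complex vector space with basis $\{[w]\}$ indexed by admissible $k$-words; $\psi_k:V_1\to V_k$ is linear with $\psi_k([a])$ the sum of $[w]$ over admissible $k$-words beginning with $a$; $T_k:V_k\to V_k$ is linear with $T_k([a_1\cdots a_k])=\sum[a_2\cdots a_kx]$ over symbols $x$ with $a_2\cdots a_kx$ admissible. For an admissible $k$-word $u=u_1\cdots u_k$, $h(u)$ is the least non-negative integer $h$ such that $u$ is the only admissible $k$-word beginning with $u_1\cdots u_{h+1}$. For admissible $(k+1)$-words $w_1=a_0\cdots a_k$, $w_2=b_0\cdots b_k$: $d_1=h(a_1\cdots a_k)$; $W$ is the span of $\psi_k(V_1)$ and $T_k^i[a_1\cdots a_k]$, $0\le i\le d_1-1$; $d_2$ is the least non-negative integer with $T_k^{d_2}[b_1\cdots b_k]\in W$. Correlation coefficients: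 for $0\le i\le d_1$, $c^{11}_{d_1-i}=1$ if $a_0\cdots a_{k-i}=a_i\cdots a_k$, $c^{21}_{d_1-i}=1$ if $b_0\cdots b_{k-i}=a_i\cdots a_k$; for $0\le j\le d_2$, $c^{12}_{d_2-j}=1$ if $a_0\cdots a_{k-j}=b_j\cdots b_k$, $c^{22}_{d_2-j}=1$ if $b_0\cdots b_{k-j}=b_j\cdots b_k$; all are $0$ otherwise. Correlation polynomials: $p_{11}(t)=\sum_{i=0}^{d_1}c^{11}_{d_1-i}t^{d_1-i}$, $p_{21}(t)=\sum_{i=1}^{d_1}c^{21}_{d_1-i}t^{d_1-i}$, $p_{12}(t)=\sum_{j=1}^{d_2}c^{12}_{d_2-j}t^{d_2-j}$, $p_{22}(t)=\sum_{j=0}^{d_2}c^{22}_{d_2-j}t^{d_2-j}$. *)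

From HB Require Import structures.
From mathcomp Require Import all_boot all_order all_algebra.
From mathcomp Require Import complex.
From mathcomp Require Import reals.
Set Implicit Arguments. Unset Strict Implicit. Unset Printing Implicit Defensive.
Import Order.TTheory GRing.Theory Num.Theory.
Local Open Scope ring_scope.

Section Defs.
Variable r : nat.
(* transition matrix T, with T x y in {0,1} encoded as a boolean *)
Variable T : 'I_r -> 'I_r -> bool.

Definition edge : rel 'I_r := fun x y => T y x.

Definition irreducible : Prop := forall x y : 'I_r, connect edge x y.

Definition admissible (w : seq 'I_r) : bool := sorted edge w.

Definition AW (k : nat) := {t : k.-tuple 'I_r | admissible t}.

Variable R : realType.
Definition Cx := R[i].

Definition V (k : nat) := {ffun AW k -> Cx^o}.

Definition bvec k (w : AW k) : V k := [ffun x => (x == w)%:R].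

Definition psi k (a : 'I_r) : V k :=
  \sum_(w : AW k | head a (val (val w)) == a) bvec w.
(* note: for k >= 1, head a w == a is exactly "w begins with a" *)

(* basis vector [s] for a word s given as a sequence (zero if s is not an admissible k-word) *)
Definition wvec k (s : seq 'I_r) : V k := [ffun x => (val (val x) == s)%:R].

Definition Tk_basis k (w : AW k) : V k :=
  \sum_(v : AW k | [exists x : 'I_r, val (val v) == rcons (behead (val (val w))) x]) bvec v.

Definition Tmap k (f : V k) : V k := \sum_(w : AW k) f w *: Tk_basis w.

Definition unique_prefix (u : seq 'I_r) (h : nat) : bool :=
  [forall v : AW (size u), (take h.+1 (val (val v)) == take h.+1 u) ==> (val (val v) == u)].

(* h(u): the least such h; for an admissible u of length k >= 1 the value
   h = k - 1 always qualifies, so the search over 0 .. k-1 returns the least one *)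
Definition hh (u : seq 'I_r) : nat := find (unique_prefix u) (iota 0 (size u)).

Definition W k (u : seq 'I_r) (d1 : nat) : {vspace V k} :=
  <<[seq psi k a | a <- enum 'I_r] ++ [seq iter i (@Tmap k) (wvec k u) | i <- iota 0 d1]>>%VS.

Definition corr (k : nat) (x y : seq 'I_r) (i : nat) : bool :=
  take (k.+1 - i) x == drop i y.

Definition p11 k (w1 : seq 'I_r) d1 (t : Cx) : Cx :=
  \sum_(0 <= i < d1.+1) (corr k w1 w1 i)%:R * t ^+ (d1 - i).
Definition p21 k (w1 w2 : seq 'I_r) d1 (t : Cx) : Cx :=
  \sum_(1 <= i < d1.+1) (corr k w2 w1 i)%:R * t ^+ (d1 - i).
Definition p12 k (w1 w2 : seq 'I_r) d2 (t : Cx) : Cx :=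
  \sum_(1 <= j < d2.+1) (corr k w1 w2 j)%:R * t ^+ (d2 - j).
Definition p22 k (w2 : seq 'I_r) d2 (t : Cx) : Cx :=
  \sum_(0 <= j < d2.+1) (corr k w2 w2 j)%:R * t ^+ (d2 - j).
End Defs.

From HB Require Import structures.
From mathcomp Require Import all_boot all_order all_algebra.
From mathcomp Require Import complex.
From mathcomp Require Import reals.
From mathcomp Require Import ring lra zify.
Import Order.TTheory GRing.Theory Num.Theory Normc.

(* Put [z = 1/t], so that [|z| <= r := 1/rho < 1]: [p11(t) = t^d1 A(z)] where
   [A] has 0/1 coefficients, that of [z^j] recording whether [w1] has period [j],
   and likewise [p22 = t^d2 B], [p12 = t^d2 C], [p21 = t^d1 D] with cross
   correlations.  Only the coefficients below [M] matter, up to [r^M / (1 - r)].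
   Below [M], the periods of a word of length at least [2 M] are the multiples of
   its least period [p], so [(1 - z^p) A ~ 1]; the positive cross shifts below [M]
   are either absent or a progression [s + p N], so [(1 - z^p) C ~ z^s].  Hence
   [(1 - z^p) (1 - z^q) (A B - C D)] is close to [1 - z^(s + u)] or to [1], both
   of modulus at least [1 - r], while [|1 - z^p| <= 2]. *)

Section Overlap.
Context {T : eqType}.
Implicit Types (f g h : nat -> T) (n : nat).

Definition overlap f g n j : bool :=
  all (fun i => f i == g (i + j)) (iota 0 (n - j)).

Lemma overlapP f g n j :
  reflect (forall i, i + j < n -> f i = g (i + j)) (overlap f g n j).
Proof.
apply: (iffP allP) => fg i lt_i; apply/eqP/fg; move: lt_i; rewrite ?mem_iota; lia.
Qed.

Lemma overlap0 f n : overlap f f n 0.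
Proof. by apply/overlapP => i _; rewrite addn0. Qed.

Lemma overlapD [f g h n a b] :
  overlap f g n a -> overlap g h n b -> overlap f h n (a + b).
Proof.
move=> /overlapP fg /overlapP gh; apply/overlapP => i lt_i.
by rewrite fg ?gh -?addnA //; lia.
Qed.

Lemma overlap_muln f n m p : overlap f f n p -> overlap f f n (m * p).
Proof.
move=> fp; elim: m => [|m IHm]; first exact: overlap0.
by rewrite mulSn; apply: overlapD fp IHm.
Qed.

Lemma overlapB [f n a b] : a <= b -> a + b <= n ->
  overlap f f n a -> overlap f f n b -> overlap f f n (b - a).
Proof.
move=> le_ab le_abn /overlapP fa /overlapP fb; apply/overlapP => i lt_i.
have [lt_ib | le_bi] := ltnP (i + b) n.
- rewrite fb // (fa (i + (b - a))); last lia.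
  by congr f; lia.
- rewrite -(subnK (_ : a <= i)); last lia.
  rewrite -fa; last lia.
  by rewrite fb; [congr f | ]; lia.
Qed.

(* If [i] is a period, so is [i %% p], by [overlapB]. *)
Lemma small_periods f n M : 2 * M <= n ->
  exists2 p, 0 < p & forall i, i < M -> overlap f f n i = (p %| i).
Proof.
move=> le_2Mn.
have exP : exists i, (0 < i) && ((M <= i) || overlap f f n i).
  by exists M.+1; rewrite leqnSn.
have [p /andP[p_gt0 Pp] p_min] := ex_minnP exP.
have p_le j : 0 < j -> overlap f f n j -> p <= j.
  by move=> j_gt0 fj; apply: p_min; rewrite j_gt0 fj orbT.
have per_p : p < M -> overlap f f n p by rewrite ltnNge; case: (M <= p) Pp.
exists p => // i lt_iM; apply/idP/idP => [fi | /dvdnP[m def_i]].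
- have fq : overlap f f n (i %/ p * p).
    have [lt_pM | le_Mp] := ltnP p M; first exact/overlap_muln/per_p.
    by rewrite divn_small ?mul0n ?overlap0 //; lia.
  have : overlap f f n (i %% p).
    have -> : i %% p = i - i %/ p * p by rewrite {2}(divn_eq i p) addKn.
    by apply: overlapB fq fi; have := leq_divM i p; lia.
  rewrite /dvdn; case: posnP => // mod_gt0 /(p_le _ mod_gt0).
  by rewrite leqNgt ltn_pmod.
- subst i; case: m lt_iM => [|m] lt_iM; first exact: overlap0.
  by apply/overlap_muln/per_p; apply: leq_ltn_trans lt_iM; apply: leq_pmull.
Qed.

(* [j - s] is the difference of the periods [j + u] and [s + u] of [f]. *)
Lemma small_shifts f g n M p s u : 4 * M <= n ->
    (forall i, i < M -> overlap f f n i = (p %| i)) ->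
    0 < s -> s < M -> overlap f g n s ->
    (forall j, 0 < j -> j < M -> overlap f g n j -> s <= j) ->
    u < M -> overlap g f n u ->
  forall j, j < M -> (0 < j) && overlap f g n j = (s <= j) && (p %| j - s).
Proof.
move=> le_4Mn per_f s_gt0 lt_sM fgs s_min lt_uM gfu j lt_jM.
apply/idP/idP => [/andP[j_gt0 fgj] | /andP[le_sj p_js]].
- have le_sj := s_min j j_gt0 lt_jM fgj.
  rewrite le_sj -per_f; last lia.
  rewrite (_ : j - s = j + u - (s + u)); last lia.
  by apply: overlapB (overlapD fgs gfu) (overlapD fgj gfu); lia.
- rewrite (leq_trans s_gt0 le_sj) -(subnK le_sj).
  by apply: overlapD fgs; rewrite per_f //; lia.
Qed.

Lemma small_shift_cases f g n M :
  (forall j, j < M -> (0 < j) && overlap f g n j = false) \/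
  exists s, [/\ 0 < s, s < M, overlap f g n s &
                forall j, 0 < j -> j < M -> overlap f g n j -> s <= j].
Proof.
case: (boolP [exists j : 'I_M, (0 < j) && overlap f g n j]) => [|none].
- case/existsP=> j /andP[j_gt0 fgj].
  have exs : exists s, [&& 0 < s, s < M & overlap f g n s].
    by exists j; rewrite j_gt0 ltn_ord.
  have [s /and3P[s_gt0 lt_sM fgs] s_min] := ex_minnP exs.
  right; exists s; split=> // i i_gt0 lt_iM fgi.
  by apply: s_min; rewrite i_gt0 lt_iM.
- left => j lt_jM; apply: negbTE; apply: contra none => fgj.
  by apply/existsP; exists (Ordinal lt_jM).
Qed.

End Overlap.

Lemma progression_shift s p i : 0 < p ->
  nat_of_bool ((s <= i) && (p %| i - s)) =
  (p <= i) && (s <= i - p) && (p %| i - p - s) + (i == s).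
Proof.
move=> p_gt0; case: eqP => [-> | neq_is].
  by rewrite leqnn subnn dvdn0 (_ : (p <= s) && (s <= s - p) = false) //; lia.
rewrite addn0; congr nat_of_bool.
have [lt_is_p | le_p_is] := ltnP (i - s) p.
- rewrite (_ : (p <= i) && (s <= i - p) = false); last lia.
  apply/negbTE/negP => /andP[le_si /dvdn_leq p_le].
  have : p <= i - s by apply: p_le; lia.
  lia.
- have [-> -> ->] : [/\ s <= i, p <= i & s <= i - p] by split; lia.
  by rewrite (_ : i - p - s = i - s - p) ?(dvdn_subl le_p_is (dvdnn p)) //; lia.
Qed.

Lemma corr_overlap {r : nat} (x0 : 'I_r) [k : nat] [u v : seq 'I_r] :
  size u = k.+1 -> size v = k.+1 ->
  corr k u v =1 overlap (nth x0 u) (nth x0 v) k.+1.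
Proof.
move=> size_u size_v j; apply/eqP/overlapP => [uv i lt_i | uv].
- have := congr1 (nth x0 ^~ i) uv.
  by rewrite /= nth_take ?nth_drop 1?addnC //; lia.
- apply: (eq_from_nth (x0 := x0)); first by rewrite size_drop size_takel; lia.
  move=> i; rewrite size_takel => [lt_i|]; last lia.
  by rewrite nth_take ?nth_drop 1?addnC ?uv //; lia.
Qed.

Lemma hh_le_size {r : nat} (T : 'I_r -> 'I_r -> bool) (u : seq 'I_r) :
  hh T u <= size u.
Proof. by rewrite /hh -[X in _ <= X](size_iota 0); apply: find_size. Qed.

Local Open Scope ring_scope.
Local Open Scope complex_scope.

Section ComplexNorm.
Context {R : rcfType}.
Implicit Types x y : R[i].

Lemma normr_normc x : `|x| = (normc x)%:C.
Proof. by []. Qed.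

Lemma normc_ge0 x : 0 <= normc x.
Proof. by rewrite -ler0c; exact: (normr_ge0 x). Qed.

Lemma normcX x n : normc (x ^+ n) = normc x ^+ n.
Proof. by apply: complexI; rewrite rmorphXn; apply: normrX. Qed.

Lemma le_normc_sum {I : Type} (s : seq I) (P : pred I) (F : I -> R[i]) :
  normc (\sum_(i <- s | P i) F i) <= \sum_(i <- s | P i) normc (F i).
Proof. by rewrite -lecR rmorph_sum; exact: (ler_norm_sum s F P). Qed.

Lemma le_normcB x y : normc (x - y) <= normc x + normc y.
Proof. by rewrite -(normcN y) le_normcD. Qed.

Lemma ge_normcB x y : normc x - normc y <= normc (x - y).
Proof. by rewrite lerBlDr -[X in normc X](subrK y) le_normcD. Qed.

Lemma normc_boolB_le1 (b c : bool) : normc (b%:R - c%:R : R[i]) <= 1.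
Proof.
by case: b c => [] []; rewrite ?subrr ?subr0 ?sub0r ?normcN ?normc0 ?normc1.
Qed.

End ComplexNorm.

Lemma geometric_tail_le {R : realFieldType} (r : R) M L : 0 <= r -> r < 1 ->
  \sum_(i < L) (M <= i)%N%:R * r ^+ i <= r ^+ M / (1 - r).
Proof.
move=> r_ge0 r_lt1.
have telescope : (1 - r) * \sum_(i < L) (M <= i)%N%:R * r ^+ i
                 = r ^+ M - r ^+ maxn M L.
  elim: L => [|L IHL]; first by rewrite big_ord0 mulr0 maxn0 subrr.
  rewrite big_ord_recr /= mulrDr IHL.
  have [le_ML | lt_LM] := leqP M L.
  - by rewrite (maxn_idPr (leqW le_ML)) mul1r exprS; ring.
  - by rewrite (maxn_idPl lt_LM) mul0r; ring.
rewrite ler_pdivlMr ?subr_gt0 // mulrC telescope.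
by rewrite lerBlDr lerDl exprn_ge0.
Qed.

Lemma exists_geometric_tail_le {R : archiRealFieldType} [r K : R] :
  0 <= r -> r < 1 -> 0 < K -> exists2 M, (0 < M)%N & r ^+ M / (1 - r) <= K.
Proof.
move=> r_ge0 r_lt1 K_gt0; have r1_gt0 : 0 < 1 - r by rewrite subr_gt0.
set c := (K * (1 - r) ^+ 2)^-1.
have c_ge0 : 0 <= c by rewrite invr_ge0 mulr_ge0 ?exprn_ge0 ?ltW.
exists (Num.bound c).+1 => //; set M := (Num.bound c).+1.
have M_gt : c < M%:R by rewrite (lt_le_trans (archi_boundP c_ge0)) ?ler_nat.
(* [M r^M] is at most the geometric sum [1 + r + ... + r^(M-1)]. *)
have Mr_le : M%:R * r ^+ M <= (1 - r)^-1.
  have := geometric_tail_le r 0 M r_ge0 r_lt1; rewrite expr0 div1r; apply: le_trans.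
  rewrite mulr_natl -[M in _ *+ M]card_ord -sumr_const; apply: ler_sum => i _.
  by rewrite mul1r; apply: ler_wiXn2l; rewrite ?r_ge0 ?ltW // ltnW.
have K1_gt0 : 0 < K * (1 - r) ^+ 2 by rewrite mulr_gt0 ?exprn_gt0.
have M_gt0 : 0 < M%:R :> R by apply: le_lt_trans M_gt.
have {}Mr_le : M%:R * (1 - r) * r ^+ M <= 1.
  by rewrite mulrAC -ler_pdivlMr // div1r.
have {}M_gt : 1 < M%:R * (1 - r) * (K * (1 - r)).
  by move: M_gt; rewrite /c -div1r ltr_pdivrMr //; lra.
rewrite ler_pdivrMr // -(ler_pM2l (_ : 0 < M%:R * (1 - r))) ?mulr_gt0 //.
lra.
Qed.

Section IndicatorPoly.
Context {R : rcfType}.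
Local Notation C := R[i].
Implicit Types (e : nat -> bool) (d : nat).

Definition indicator_poly e d : {poly C} := \poly_(i < d.+1) (e i)%:R.

Lemma coef_indicator_poly e d i : (indicator_poly e d)`_i = ((i <= d)%N && e i)%:R.
Proof. by rewrite coef_poly ltnS; case: (i <= d)%N. Qed.

Lemma eq_indicator_poly e1 e2 d :
  (forall i, e1 i = e2 i) -> indicator_poly e1 d = indicator_poly e2 d.
Proof. by move=> e12; apply/polyP => i; rewrite !coef_indicator_poly e12. Qed.

Lemma sum_rev_indicator_poly e d (t : C) : t != 0 ->
  \sum_(0 <= i < d.+1) (e i)%:R * t ^+ (d - i) = t ^+ d * (indicator_poly e d).[t^-1].
Proof.
move=> t_neq0; rewrite horner_poly big_mkord mulr_sumr; apply: eq_bigr => i _.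
by rewrite (exprB (ltn_ord i : (i <= d)%N)) ?unitfE // exprVn mulrCA.
Qed.

Lemma sum1_rev_indicator_poly e d (t : C) : t != 0 ->
  \sum_(1 <= i < d.+1) (e i)%:R * t ^+ (d - i) =
  t ^+ d * (indicator_poly (fun i => (0 < i)%N && e i) d).[t^-1].
Proof.
move=> t_neq0; rewrite -sum_rev_indicator_poly // [RHS]big_ltn //= mul0r add0r.
by apply: eq_big_nat => i /andP[i_gt0 _]; rewrite i_gt0.
Qed.

End IndicatorPoly.

Section Determinant.
Context {R : rcfType}.
Implicit Types (x y X Y U V w : R[i]) (eps delta : R).

Lemma normc_mulB_le [X Y x y eps] : normc x <= 1 -> normc y <= 1 -> eps <= 1 ->
  normc (X - x) <= eps -> normc (Y - y) <= eps -> normc (X * Y - x * y) <= 3%:R * eps.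
Proof.
move=> x_le1 y_le1 eps_le1 Xx Yy.
have Y_le : normc Y <= 1 + eps by have := le_normcD (Y - y) y; rewrite subrK; lra.
have -> : X * Y - x * y = (X - x) * Y + x * (Y - y) by ring.
apply: le_trans (le_normcD _ _) _; rewrite !normcM.
have := ler_pM (normc_ge0 _) (normc_ge0 _) Xx Y_le.
have := ler_pM (normc_ge0 _) (normc_ge0 _) x_le1 Yy.
have := normc_ge0 (Y - y); nra.
Qed.

Lemma normc_detB_ge [X Y U V w eps delta] : eps <= 1 ->
    normc (X - 1) <= eps -> normc (Y - 1) <= eps -> normc (U * V - w) <= delta ->
  normc (1 - w) - 3%:R * eps - delta <= normc (X * Y - U * V).
Proof.
move=> eps_le1 X1 Y1 UVw.
have XY1 : normc (1 - X * Y) <= 3%:R * eps.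
  by rewrite -normcN opprB -(mulr1 (1 : R[i])) normc_mulB_le ?normc1.
have -> : X * Y - U * V = (1 - w) - ((1 - X * Y) + (U * V - w)) by ring.
have := ge_normcB (1 - w) ((1 - X * Y) + (U * V - w)).
have := le_normcD (1 - X * Y) (U * V - w).
lra.
Qed.

End Determinant.

Section TailBounds.
Context {R : rcfType} {r : R} {z : R[i]}.
Hypotheses (r_ge0 : 0 <= r) (r_lt1 : r < 1) (z_le_r : normc z <= r).

Lemma normc_horner_tail (P : {poly R[i]}) M :
  (forall i, (i < M)%N -> P`_i = 0) -> (forall i, normc P`_i <= 1) ->
  normc P.[z] <= r ^+ M / (1 - r).
Proof.
move=> P_lo P_le1; rewrite horner_coef.
apply: le_trans (le_normc_sum _ _ _) _.
apply: le_trans (geometric_tail_le r M (size P) r_ge0 r_lt1).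
apply: ler_sum => i _; rewrite normcM normcX.
have [lt_iM | le_Mi] := ltnP i M; first by rewrite P_lo // normc0 !mul0r.
rewrite mul1r -[X in _ <= X]mul1r; apply: ler_pM; rewrite ?exprn_ge0 ?normc_ge0 //.
by apply: lerXn2r; rewrite ?nnegrE ?normc_ge0.
Qed.

Lemma normc_indicator_poly_tail e d M : (forall i, (i < M)%N -> e i = false) ->
  normc (indicator_poly e d).[z] <= r ^+ M / (1 - r).
Proof.
move=> e_lo; apply: normc_horner_tail => i; rewrite coef_indicator_poly.
  by move=> lt_iM; rewrite e_lo ?andbF.
by case: (_ && _); rewrite ?normc1 ?normc0.
Qed.

Lemma normc_indicator_poly_progression e d M p s :
    (0 < p)%N -> (s < M)%N -> (M <= d)%N ->
    (forall j, (j < M)%N -> e j = (s <= j) && (p %| j - s))%N ->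
  normc ((1 - z ^+ p) * (indicator_poly e d).[z] - z ^+ s) <= r ^+ M / (1 - r).
Proof.
move=> p_gt0 lt_sM le_Md e_prog.
(* [1 - z^p] telescopes the indicator series of [s + p N] down to [z^s]. *)
pose Q : {poly R[i]} := (1 - 'X^p) * indicator_poly e d - 'X^s.
have -> : (1 - z ^+ p) * (indicator_poly e d).[z] - z ^+ s = Q.[z] by rewrite !hornerE.
have coefQ i : Q`_i = ((i <= d)%N && e i)%:R
                      - ((p <= i) && (i - p <= d) && e (i - p))%N%:R - (i == s)%:R.
  rewrite /Q mulrBl mul1r !coefB coefXnM coefXn !coef_indicator_poly.
  by rewrite [(p <= i)%N]leqNgt; case: (i < p)%N.
have Q_lo i : (i < M)%N -> Q`_i = 0.
  move=> lt_iM; rewrite coefQ (_ : (i <= d)%N); last lia.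
  rewrite (_ : (i - p <= d)%N); last lia.
  rewrite andTb andbT !e_prog; [|lia|lia].
  apply/eqP; rewrite subr_eq0 subr_eq -natrD eqr_nat.
  by rewrite (progression_shift s p i p_gt0) andbA addnC.
apply: (normc_horner_tail Q M Q_lo) => i.
have [/Q_lo -> | le_Mi] := ltnP i M; first by rewrite normc0.
by rewrite coefQ (_ : i == s = false) ?subr0 ?normc_boolB_le1 //; lia.
Qed.

Lemma normcX_le1 n : normc (z ^+ n) <= 1.
Proof. by rewrite normcX exprn_ile1 ?normc_ge0 // (le_trans z_le_r) ?ltW. Qed.

Lemma normc_1BX_le2 n : normc (1 - z ^+ n) <= 2%:R.
Proof. have := le_normcB 1 (z ^+ n); have := normcX_le1 n; rewrite normc1; lra. Qed.

Lemma normc_1BX_ge n : (0 < n)%N -> 1 - r <= normc (1 - z ^+ n).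
Proof.
case: n => // n _; have := ge_normcB 1 (z ^+ n.+1); rewrite normc1.
have : normc (z ^+ n.+1) <= r.
  by rewrite exprS normcM -[r]mulr1 ler_pM ?normc_ge0 ?normcX_le1.
lra.
Qed.

Lemma normc_det_approx_ge [A B C D : R[i]] p q [eps : R] :
    eps <= (1 - r) ^+ 2 / 32%:R ->
    normc ((1 - z ^+ p) * A - 1) <= eps -> normc ((1 - z ^+ q) * B - 1) <= eps ->
    (exists s u, [/\ (0 < s + u)%N, normc ((1 - z ^+ p) * C - z ^+ s) <= eps
                  & normc ((1 - z ^+ q) * D - z ^+ u) <= eps])
    \/ normc C * normc D <= eps / (1 - r) ->
  (1 - r) / 8%:R <= normc (A * B - C * D).
Proof.
move=> eps_le Ap Bq CD.
have r1_gt0 : 0 < 1 - r by rewrite subr_gt0.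
have eps_ge0 : 0 <= eps := le_trans (normc_ge0 _) Ap.
have eps_div : eps / (1 - r) <= (1 - r) / 32%:R.
  by rewrite ler_pdivrMr // mulrAC -expr2.
have eps_le_div : eps <= eps / (1 - r).
  by rewrite ler_pdivlMr // ler_piMr // lerBlDr lerDl.
have eps_le1 : eps <= 1.
  have : 1 - r <= 1 by rewrite gerBl.
  by move: eps_div eps_le_div; set E := eps / _; lra.
have a_le2 := normc_1BX_le2 p; have b_le2 := normc_1BX_le2 q.
set a := 1 - z ^+ p in Ap a_le2 CD *; set b := 1 - z ^+ q in Bq b_le2 CD *.
have ab_le4 : normc a * normc b <= 4%:R.
  by rewrite (_ : 4%:R = 2%:R * 2%:R :> R) ?ler_pM ?normc_ge0 // -natrM.
have [w [w_far UVw]] : exists w, 1 - r <= normc (1 - w) /\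
    normc (a * C * (b * D) - w) <= 4%:R * (eps / (1 - r)).
  case: CD => [[s [u [su_gt0 Cs Du]]] | CD_small].
  - exists (z ^+ (s + u)); split; first exact: normc_1BX_ge.
    have := normc_mulB_le (normcX_le1 s) (normcX_le1 u) eps_le1 Cs Du.
    by rewrite -exprD; lra.
  - exists 0; split; first by rewrite subr0 normc1 gerBl.
    by rewrite subr0 !normcM mulrACA ler_pM ?mulr_ge0 ?normc_ge0.
have := normc_detB_ge eps_le1 Ap Bq UVw.
rewrite (_ : a * A * (b * B) - a * C * (b * D) = a * b * (A * B - C * D)); last by ring.
have := ler_wpM2r (normc_ge0 (A * B - C * D)) ab_le4.
rewrite !normcM; move: eps_div eps_le_div; set E := eps / _; lra.
Qed.

Lemma normc_overlap_det_ge {T : eqType} [f g : nat -> T] [n M d1 d2] :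
    r ^+ M / (1 - r) <= (1 - r) ^+ 2 / 32%:R ->
    (0 < M)%N -> (4 * M <= n)%N -> (M <= d1)%N -> (M <= d2)%N ->
  (1 - r) / 8%:R <= normc
    ((indicator_poly (overlap f f n) d1).[z] * (indicator_poly (overlap g g n) d2).[z]
     - (indicator_poly (fun j => (0 < j)%N && overlap f g n j) d2).[z]
       * (indicator_poly (fun j => (0 < j)%N && overlap g f n j) d1).[z]).
Proof.
move=> tail_small M_gt0 le_4Mn le_Md1 le_Md2.
set eps := r ^+ M / (1 - r) in tail_small *.
have le_2Mn : (2 * M <= n)%N by lia.
have autocorr_approx (h : nat -> T) p d : (0 < p)%N -> (M <= d)%N ->
    (forall i, (i < M)%N -> overlap h h n i = (p %| i)%N) ->
    normc ((1 - z ^+ p) * (indicator_poly (overlap h h n) d).[z] - 1) <= eps.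
  move=> p_gt0 le_Md per_h.
  have := normc_indicator_poly_progression (overlap h h n) d M p 0 p_gt0 M_gt0 le_Md.
  by rewrite expr0; apply => j lt_jM; rewrite per_h // subn0.
have small_times_bounded e e' d d' : (forall j, (j < M)%N -> e j = false) ->
    normc (indicator_poly e d).[z] * normc (indicator_poly e' d').[z] <= eps / (1 - r).
  move=> e_lo; apply: ler_pM; rewrite ?normc_ge0 //.
    exact: normc_indicator_poly_tail.
  have := @normc_indicator_poly_tail e' d' 0; rewrite expr0 div1r; apply => i.
  by rewrite ltn0.
have [p p_gt0 per_f] := small_periods f n M le_2Mn.
have [q q_gt0 per_g] := small_periods g n M le_2Mn.
apply: (normc_det_approx_ge p q tail_small); rewrite ?autocorr_approx //.
have [no_fg | [s [s_gt0 lt_sM fgs s_min]]] := small_shift_cases f g n M.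
  by right; apply: small_times_bounded.
have [no_gf | [u [u_gt0 lt_uM gfu u_min]]] := small_shift_cases g f n M.
  by right; rewrite mulrC; apply: small_times_bounded.
left; exists s, u; split; first by rewrite addn_gt0 s_gt0.
- apply: normc_indicator_poly_progression => //.
  exact: small_shifts le_4Mn per_f s_gt0 lt_sM fgs s_min lt_uM gfu.
- apply: normc_indicator_poly_progression => //.
  exact: small_shifts le_4Mn per_g u_gt0 lt_uM gfu u_min lt_sM fgs.
Qed.

Lemma normc_corr_det_ge {n : nat} [k : nat] [w1 w2 : seq 'I_n] [M d1 d2] :
    r ^+ M / (1 - r) <= (1 - r) ^+ 2 / 32%:R ->
    size w1 = k.+1 -> size w2 = k.+1 ->
    (0 < M)%N -> (4 * M <= k.+1)%N -> (M <= d1)%N -> (M <= d2)%N ->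
  (1 - r) / 8%:R <= normc
    ((indicator_poly (corr k w1 w1) d1).[z] * (indicator_poly (corr k w2 w2) d2).[z]
     - (indicator_poly (fun j => (0 < j)%N && corr k w1 w2 j) d2).[z]
       * (indicator_poly (fun j => (0 < j)%N && corr k w2 w1 j) d1).[z]).
Proof.
move=> tail_small size_w1 size_w2; have x0 : 'I_n by case: (w1) size_w1 => // a.
under [indicator_poly (corr k w1 w1) _]eq_indicator_poly
  do rewrite (corr_overlap x0 size_w1 size_w1).
under [indicator_poly (corr k w2 w2) _]eq_indicator_poly
  do rewrite (corr_overlap x0 size_w2 size_w2).
under [indicator_poly (fun j => _ && corr k w1 w2 j) _]eq_indicator_poly
  do rewrite (corr_overlap x0 size_w1 size_w2).
under [indicator_poly (fun j => _ && corr k w2 w1 j) _]eq_indicator_poly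
  do rewrite (corr_overlap x0 size_w2 size_w1).
exact: normc_overlap_det_ge tail_small.
Qed.

End TailBounds.

Theorem proposition4p3 (r : nat) (T : 'I_r -> 'I_r -> bool) (R : realType)
  (rho : R) :
  irreducible T -> 1 < rho ->
  exists (D0 : R) (N : nat), 0 < D0 /\
    forall (k : nat) (w1 w2 : seq 'I_r),
      size w1 = k.+1 -> admissible T w1 ->
      size w2 = k.+1 -> admissible T w2 ->
      let d1 := hh T (behead w1) in
      forall d2 : nat,
        iter d2 (@Tmap r T R k) (@wvec r T R k (behead w2))
          \in @W r T R k (behead w1) d1 ->
        (forall j, (j < d2)%N ->
           iter j (@Tmap r T R k) (@wvec r T R k (behead w2))
             \notin @W r T R k (behead w1) d1) ->
        (N <= d1)%N -> (N <= d2)%N ->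
        forall t : Cx R, rho%:C <= `|t| ->
          D0%:C * `|t| ^+ (d1 + d2) <=
          `| @p11 r R k w1 d1 t * @p22 r R k w2 d2 t
             - @p12 r R k w1 w2 d2 t * @p21 r R k w1 w2 d1 t |.
Proof.
move=> _ rho_gt1; set c := rho^-1.
have c_ge0 : 0 <= c by rewrite invr_ge0 (le_trans ler01) ?ltW.
have c_lt1 : c < 1 by rewrite invf_lt1 ?(lt_trans ltr01).
have K_gt0 : 0 < (1 - c) ^+ 2 / 32%:R by rewrite divr_gt0 ?exprn_gt0 ?subr_gt0.
have [M M_gt0 tail_small] := exists_geometric_tail_le c_ge0 c_lt1 K_gt0.
exists ((1 - c) / 8%:R), (4 * M)%N; split => [|k w1 w2 size_w1 _ size_w2 _ d1 d2 _ _].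
  by rewrite divr_gt0 ?subr_gt0.
move=> le_Nd1 le_Nd2 t rho_le_t.
have le_d1k : (d1 <= k)%N.
  by have := hh_le_size T (behead w1); rewrite size_behead size_w1.
have rho_le : rho <= normc t by rewrite -lecR -normr_normc.
have rho_gt0 : 0 < rho := lt_trans ltr01 rho_gt1.
have t_neq0 : t != 0.
  by apply: contraTneq rho_le => ->; rewrite normc0 -ltNge.
have z_le_c : normc t^-1 <= c.
  by rewrite normcV lef_pV2 ?posrE ?(lt_le_trans rho_gt0 rho_le).
rewrite /p11 /p22 /p12 /p21 !sum_rev_indicator_poly // !sum1_rev_indicator_poly //.
rewrite (_ : forall a b u v : Cx R,
    t ^+ d1 * a * (t ^+ d2 * b) - t ^+ d2 * u * (t ^+ d1 * v)
    = t ^+ (d1 + d2) * (a * b - u * v)); last by move=> *; rewrite exprD; ring.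
rewrite normrM normrX mulrC; apply: ler_wpM2l; first exact: exprn_ge0.
rewrite normr_normc lecR.
by apply: (normc_corr_det_ge c_ge0 c_lt1 z_le_c tail_small) => //; lia.
Qed.
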